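(* Let $n\geq 1$ and $t_i,p_i\in\mathbb{N}_{\geq 0}$ for $1\leq i\leq n$, and set $X=\bigcup_{i=1}^n(t_i+\mathbb{N}_{\geq 0}\cdot p_i)$, where $\mathbb{N}_{\geq 0}\cdot p_i=\{x\cdot p_i\mid x\in\mathbb{N}_{\geq 0}\}$. If there exists $T\geq 0$ such that $\{x\in\mathbb{N}_{\geq 0}\mid x\geq T\}\subseteq X$, then with $T_{\max}=\max\{t_i\mid 1\leq i\leq n\}$ we have $\{x\in\mathbb{N}_{\geq 0}\mid x\geq T_{\max}\}\subseteq X$. *)

From mathcomp Require Import all_boot.
Set Implicit Arguments. Unset Strict Implicit. Unset Printing Implicit Defensive.

Definition inX (n : nat) (t p : 'I_n -> nat) (x : nat) : Prop :=
  exists i : 'I_n, exists k : nat, x = t i + k * p i.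

From mathcomp Require Import all_boot.

(* Shifting x >= T_max by a multiple of every (positive) period lands above T,
   hence in some progression t_i + N p_i; as the shift is a multiple of p_i and
   x >= t_i, x itself lies in that progression. *)

Definition in_prog (t p x : nat) : Prop := exists k, x = t + k * p.

Lemma in_prog_shift (t p x d : nat) :
  t <= x -> maxn p 1 %| d -> in_prog t p (x + d) -> in_prog t p x.
Proof.
move=> le_tx dvd_d [k E].
have [p0 | p_gt0] := posnP p.
  exists 0; rewrite addn0; apply/eqP; rewrite eqn_leq le_tx andbT.
  by rewrite -(addn0 t) -(muln0 k) -p0 -E leq_addr.
have dvd_pd : p %| d by rewrite (maxn_idPl p_gt0) in dvd_d.
have dvd_pxt : p %| x - t.
  by rewrite -(dvdn_addl _ dvd_pd) addnBAC // E addKn dvdn_mull.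
by exists ((x - t) %/ p); rewrite divnK // subnKC.
Qed.

Theorem lemma19 (n : nat) (t p : 'I_n -> nat) (hn : 1 <= n) :
  (exists T : nat, forall x : nat, T <= x -> inX t p x) ->
  forall x : nat, \max_(i < n) t i <= x -> inX t p x.
Proof.
move=> [T HT] x le_max_x.
set Q := \prod_(j < n) maxn (p j) 1.
have Q_gt0 : 0 < Q by apply: prodn_gt0 => j; rewrite leq_max orbT.
have le_T_shift : T <= x + T * Q by rewrite (leq_trans (leq_pmulr T Q_gt0)) ?leq_addl.
have [i in_prog_i] := HT _ le_T_shift.
exists i; move: in_prog_i; apply: in_prog_shift.
  exact: leq_trans (leq_bigmax i) le_max_x.
by rewrite dvdn_mull // /Q (bigD1 i) //= dvdn_mulr.
Qed.
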